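(* Let $N$ be a positive integer, $h:=1/N$, $t_j:=jh$ for $j\in\mathbb Z$, and $e_n(t):=\exp(2\pi i n t)$. Let $\mathbb T_h:=\mathrm{span}\{e_n : n\in\mathbb Z,\ -N/2\le n<N/2\}$. Then for every $\phi\in\mathbb T_h$ and every $t\in\mathbb R$ with $t/h\notin\mathbb Z$, \[ h\sum_{j=1}^N \cot(\pi(t-t_j))\,\phi(t_j)=(H\phi)(t)+\cot(\pi t/h)\,\phi(t), \] where $(H\phi)(t):=\mathrm{p.v.}\int_0^1\cot(\pi(t-\tau))\,\phi(\tau)\,\mathrm d\tau$ is the periodic Hilbert transform.
   Context: Trigonometric polynomials are complex-valued 1-periodic functions; p.v. denotes the Cauchy principal value integral. *)

From Stdlib Require Export Reals ZArith.
From Coquelicot Require Export Coquelicot.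
Open Scope R_scope.

Definition cot (x : R) : R := cos x / sin x.

Definition e_n (n : Z) (t : R) : C :=
  (cos (2 * PI * IZR n * t), sin (2 * PI * IZR n * t)).

Fixpoint csum (n : nat) (f : nat -> C) : C :=
  match n with
  | O => RtoC 0
  | S m => Cplus (csum m f) (f m)
  end.

(* The frequencies n in Z with -N/2 <= n < N/2 are exactly
   n = k - floor(N/2) for k = 0, ..., N-1. *)
Definition freq (N k : nat) : Z := (Z.of_nat k - Z.of_nat N / 2)%Z.

Definition in_Th (N : nat) (phi : R -> C) : Prop :=
  exists c : Z -> C,
    forall t : R, phi t = csum N (fun k => Cmult (c (freq N k)) (e_n (freq N k) t)).

Definition RIntC (f : R -> C) (a b : R) : C :=
  @RInt C_R_CompleteNormedModule f a b.

Definition is_pv_integral (f : R -> C) (a b c : R) (l : C) : Prop :=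
  filterlim (fun eps => Cplus (RIntC f a (c - eps)) (RIntC f (c + eps) b))
    (at_right 0) (@locally C_R_CompleteNormedModule l).

(* (H phi)(t) = p.v. int_0^1 cot(pi (t - tau)) phi(tau) dtau = l, for t not an
   integer; the only singularity in [0,1] is at tau = frac_part t. *)
Definition is_periodic_Hilbert (phi : R -> C) (t : R) (l : C) : Prop :=
  is_pv_integral (fun tau => Cmult (RtoC (cot (PI * (t - tau)))) (phi tau))
    0 1 (frac_part t) l.

(* Both sides are linear in phi, so it suffices to take phi = e_n with
   |n| < N; both sides then equal -i sgn(n) e_n(t).  The identity
     cot(pi(t-s)) e_(n+1)(s) = e_1(t) cot(pi(t-s)) e_n(s) - i (e_1(t) e_n(s) + e_(n+1)(s))
   makes each side, as a function of n, satisfy the same first-order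
   recurrence as -i sgn(n) e_n(t): the inhomogeneous terms are the means of
   e_n over the nodes, resp. over [0,1], and both are [n = 0] for |n| < N.
   On the discrete side the value at n = 0 is pinned down by running the
   recurrence one step further, to n = N, where e_N = e_0 on the nodes; this
   gives h sum_j cot(pi(t - t_j)) = cot(pi t/h).  On the continuous side the
   recurrence is carried out on primitives: cot(pi(t-s)) e_n(s) has the
   primitive e_n(t) logsin(t - s) + G_n(s) with G_n smooth, and since the
   logarithmic part is even about the singularity and 1-periodic, the
   principal value is G_n(1) - G_n(0). *)

From Stdlib Require Import Lra Lia.

Lemma cos_2PI_IZR (k : Z) : cos (2 * PI * IZR k) = 1.
Proof.
  replace (2 * PI * IZR k) with (2 * (IZR k * PI)) by ring.
  rewrite cos_2a_sin, sin_eq_0_1 by (exists k; ring). ring.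
Qed.

Lemma sin_2PI_IZR (k : Z) : sin (2 * PI * IZR k) = 0.
Proof. apply sin_eq_0_1. exists (2 * k)%Z. rewrite mult_IZR. simpl. ring. Qed.

Lemma sin_PI_mul_neq0 (x : R) : (forall z : Z, x <> IZR z) -> sin (PI * x) <> 0.
Proof.
  intros Hx Hs. apply sin_eq_0_0 in Hs as [k Hk]. apply (Hx k).
  apply (Rmult_eq_reg_l PI); [lra | pose proof PI_RGT_0; lra].
Qed.

Lemma sin_PI_mul_strip (k : Z) (u : R) : IZR k < u < IZR k + 1 -> sin (PI * u) <> 0.
Proof.
  intros [Hlo Hhi]. apply sin_PI_mul_neq0. intros z ->.
  apply lt_IZR in Hlo. rewrite <- plus_IZR in Hhi. apply lt_IZR in Hhi. lia.
Qed.

Lemma cot_opp (x : R) : cot (- x) = - cot x.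
Proof.
  unfold cot. rewrite cos_neg, sin_neg.
  destruct (Req_dec (sin x) 0) as [-> | Hs].
  - rewrite Ropp_0, Rdiv_0_r. ring.
  - field. exact Hs.
Qed.

Lemma frac_part_nonint (t : R) : (forall z : Z, t <> IZR z) -> 0 < frac_part t < 1.
Proof.
  intros Ht. destruct (base_fp t) as [Hlo Hhi]. split; [|exact Hhi].
  destruct (Req_dec (frac_part t) 0) as [H0 | H0]; [|lra].
  destruct (fp_nat t H0) as [z Hz]. contradiction (Ht z Hz).
Qed.

Lemma C_pair_eq (a b c d : R) : a = c -> b = d -> (a, b) = (c, d) :> C.
Proof. intros -> ->. reflexivity. Qed.

Lemma Cmult_eq_0_l (a b : C) : a <> 0%C -> Cmult a b = 0%C -> b = 0%C.
Proof.
  intros Ha Hab. replace b with (Cmult (Cinv a) (Cmult a b)) by (field; exact Ha).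
  rewrite Hab. ring.
Qed.

(** * Trigonometric characters *)

Section Characters.
Local Open Scope C_scope.

Lemma e_n_add (m : Z) (x y : R) : e_n m (x + y) = e_n m x * e_n m y.
Proof.
  unfold e_n, Cmult; simpl. rewrite Rmult_plus_distr_l, cos_plus, sin_plus.
  apply C_pair_eq; ring.
Qed.

Lemma e_n_freq_add (a b : Z) (x : R) : e_n (a + b) x = e_n a x * e_n b x.
Proof.
  unfold e_n, Cmult; simpl. rewrite plus_IZR.
  replace (2 * PI * (IZR a + IZR b) * x)%R
    with (2 * PI * IZR a * x + 2 * PI * IZR b * x)%R by ring.
  rewrite cos_plus, sin_plus. apply C_pair_eq; ring.
Qed.

Lemma e_n_0 (x : R) : e_n 0 x = 1.
Proof. unfold e_n. rewrite !Rmult_0_r, Rmult_0_l, cos_0, sin_0. reflexivity. Qed.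

Lemma e_n_IZR (m k : Z) : e_n m (IZR k) = 1.
Proof.
  unfold e_n. rewrite Rmult_assoc, <- mult_IZR, cos_2PI_IZR, sin_2PI_IZR.
  reflexivity.
Qed.

Lemma e_n_opp_1 (x : R) : e_n (-1) x * e_n 1 x = 1.
Proof. rewrite <- e_n_freq_add. apply e_n_0. Qed.

Lemma e_n_1_neq_0 (x : R) : e_n 1 x <> 0.
Proof. intros H0. apply C1_nz. rewrite <- (e_n_opp_1 x), H0. ring. Qed.

Lemma cot_mul_one_sub_e_n_1 (u : R) : sin (PI * u) <> 0%R ->
  cot (PI * u) * (1 - e_n 1 u) = - Ci * (1 + e_n 1 u).
Proof.
  intros Hs. unfold e_n, cot, Cmult, Cminus, Cplus, Copp, RtoC, Ci; simpl.
  replace (2 * PI * 1 * u)%R with (2 * (PI * u))%R by ring.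
  rewrite cos_2a_cos, sin_2a.
  pose proof (sin2_cos2 (PI * u)) as Hsc. unfold Rsqr in Hsc.
  apply C_pair_eq; field_simplify_eq; auto.
  replace (sin (PI * u) ^ 2)%R with (1 - cos (PI * u) ^ 2)%R by lra. ring.
Qed.

Lemma cot_mul_e_n_succ (n : Z) (t s : R) : sin (PI * (t - s)) <> 0%R ->
  cot (PI * (t - s)) * e_n (n + 1) s =
  e_n 1 t * (cot (PI * (t - s)) * e_n n s) - Ci * (e_n 1 t * e_n n s + e_n (n + 1) s).
Proof.
  intros Hs. set (w := e_n 1 (- (t - s))). set (k := RtoC (cot (PI * (t - s)))).
  assert (Hw : e_n (n + 1) s = e_n 1 t * e_n n s * w).
  { unfold w. replace (- (t - s))%R with (s + - t)%R by ring.
    rewrite e_n_add, e_n_freq_add.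
    replace (e_n 1 (- t)) with (e_n (-1) t)
      by (unfold e_n; change (IZR (-1)) with (- (1))%R; f_equal; f_equal; ring).
    transitivity (e_n n s * e_n 1 s * (e_n (-1) t * e_n 1 t));
      [rewrite e_n_opp_1; ring | ring]. }
  assert (Hkw : k * w = k - Ci * (1 + w)).
  { assert (Hs' : sin (PI * - (t - s)) <> 0%R)
      by (rewrite <- Ropp_mult_distr_r, sin_neg; lra).
    pose proof (cot_mul_one_sub_e_n_1 _ Hs') as H.
    rewrite <- Ropp_mult_distr_r, cot_opp, RtoC_opp in H. fold w k in H.
    transitivity (k + - k * (1 - w)); [ring | rewrite H; ring]. }
  rewrite Hw. fold k.
  transitivity (e_n 1 t * e_n n s * (k * w)); [ring | rewrite Hkw; ring].
Qed.

End Characters.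

Section Sums.
Local Open Scope C_scope.

Lemma csum_ext (n : nat) (f g : nat -> C) :
  (forall k, (k < n)%nat -> f k = g k) -> csum n f = csum n g.
Proof.
  induction n as [|n IH]; intros H; simpl; [reflexivity|].
  rewrite IH, H; [reflexivity | lia | intros; apply H; lia].
Qed.

Lemma csum_plus (n : nat) (f g : nat -> C) :
  csum n (fun k => f k + g k) = csum n f + csum n g.
Proof. induction n as [|n IH]; simpl; [|rewrite IH]; ring. Qed.

Lemma csum_minus (n : nat) (f g : nat -> C) :
  csum n (fun k => f k - g k) = csum n f - csum n g.
Proof. induction n as [|n IH]; simpl; [|rewrite IH]; ring. Qed.

Lemma csum_scal (n : nat) (a : C) (f : nat -> C) :
  csum n (fun k => a * f k) = a * csum n f.
Proof. induction n as [|n IH]; simpl; [|rewrite IH]; ring. Qed.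

Lemma csum_const (n : nat) (c : C) : csum n (fun _ => c) = INR n * c.
Proof.
  induction n as [|n IH]; simpl csum; [simpl; ring|].
  rewrite IH, S_INR, RtoC_plus. ring.
Qed.

Lemma csum_swap (n m : nat) (f : nat -> nat -> C) :
  csum n (fun j => csum m (fun k => f j k)) = csum m (fun k => csum n (fun j => f j k)).
Proof.
  induction n as [|n IH]; simpl.
  - rewrite csum_const. ring.
  - rewrite IH, <- csum_plus. reflexivity.
Qed.

Lemma csum_e_n_geometric (m : Z) (x : R) (n : nat) :
  (e_n m x - 1) * csum n (fun k => e_n m (INR (S k) * x)) =
  e_n m (INR (S n) * x) - e_n m x.
Proof.
  induction n as [|n IH]; cbn [csum].
  - rewrite Rmult_1_l. ring.
  - rewrite Cmult_plus_distr_l, IH.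
    replace (INR (S (S n)) * x)%R with (INR (S n) * x + x)%R
      by (rewrite (S_INR (S n)); ring).
    rewrite e_n_add. ring.
Qed.

End Sums.

(** * The Hilbert recurrence *)

Section HilbertRecurrence.
Local Open Scope C_scope.

Definition delta0 (n : Z) : C := if Z.eq_dec n 0 then 1 else 0.

(* The periodic Hilbert transform of e_n: its Fourier multiplier is -i sgn n. *)
Definition hilbert_e (n : Z) (t : R) : C := - Ci * IZR (Z.sgn n) * e_n n t.

Lemma hilbert_e_succ (n : Z) (t : R) :
  hilbert_e (n + 1) t = e_n 1 t * hilbert_e n t - Ci * (e_n 1 t * delta0 n + delta0 (n + 1)).
Proof.
  unfold hilbert_e, delta0. rewrite (Z.add_comm n 1), e_n_freq_add.
  destruct (Z.eq_dec n 0) as [Hn0 | Hn0];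
    destruct (Z.eq_dec (1 + n) 0) as [Hn1 | Hn1]; try lia.
  - subst n. rewrite e_n_0. simpl Z.sgn. ring.
  - replace n with (-1)%Z by lia. simpl Z.sgn. rewrite <- (e_n_opp_1 t). ring.
  - replace (Z.sgn (1 + n)) with (Z.sgn n) by lia. ring.
Qed.

Lemma recurrence_zero (w : C) (D : Z -> C) (N : nat) : w <> 0 -> D 0%Z = 0 ->
  (forall n, (- Z.of_nat N < n)%Z -> (n + 1 < Z.of_nat N)%Z -> D (n + 1)%Z = w * D n) ->
  forall n, (Z.abs n < Z.of_nat N)%Z -> D n = 0.
Proof.
  intros Hw H0 Hrec.
  assert (Hnat : forall m : nat, (m < N)%nat -> D (Z.of_nat m) = 0 /\ D (- Z.of_nat m)%Z = 0).
  { induction m as [|m IH]; intros Hm; [exact (conj H0 H0)|].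
    destruct IH as [Hp Hn]; [lia|].
    rewrite Nat2Z.inj_succ. split.
    - rewrite <- Z.add_1_r, Hrec, Hp by lia. ring.
    - assert (Hs := Hrec (- Z.succ (Z.of_nat m))%Z ltac:(lia) ltac:(lia)).
      replace (- Z.succ (Z.of_nat m) + 1)%Z with (- Z.of_nat m)%Z in Hs by lia.
      rewrite Hn in Hs. symmetry in Hs. exact (Cmult_eq_0_l _ _ Hw Hs). }
  intros n Hn. destruct (Z_le_gt_dec 0 n).
  - replace n with (Z.of_nat (Z.to_nat n)) by lia. apply Hnat. lia.
  - replace n with (- Z.of_nat (Z.to_nat (- n)))%Z by lia. apply Hnat. lia.
Qed.

End HilbertRecurrence.

(** * The discrete kernel sum *)

Section NodeSums.
Local Open Scope C_scope.

Definition node_sum (N : nat) (n : Z) : C :=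
  csum N (fun k => e_n n (INR (S k) * (1 / INR N))).

Definition cot_quadrature (N : nat) (t : R) (f : R -> C) : C :=
  (1 / INR N)%R * csum N (fun k =>
    cot (PI * (t - INR (S k) * (1 / INR N))) * f (INR (S k) * (1 / INR N))%R).

Lemma cot_quadrature_ext (N : nat) (t : R) (f g : R -> C) :
  (forall y, f y = g y) -> cot_quadrature N t f = cot_quadrature N t g.
Proof.
  intros Hfg. unfold cot_quadrature. f_equal. apply csum_ext. intros k _.
  rewrite Hfg. reflexivity.
Qed.

Lemma cot_quadrature_lincomb (N M : nat) (t : R) (a : nat -> C) (g : nat -> R -> C) :
  cot_quadrature N t (fun y => csum M (fun k => a k * g k y)) =
  csum M (fun k => a k * cot_quadrature N t (g k)).
Proof.
  unfold cot_quadrature.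
  rewrite (csum_ext N _ (fun j => csum M (fun k => a k *
      (cot (PI * (t - INR (S j) * (1 / INR N))) * g k (INR (S j) * (1 / INR N))%R))))
    by (intros j _; rewrite <- csum_scal; apply csum_ext; intros; ring).
  rewrite csum_swap, <- csum_scal. apply csum_ext. intros k _.
  rewrite csum_scal. ring.
Qed.

Variable N : nat.
Hypothesis HN : (0 < N)%nat.
Local Notation h := (1 / INR N)%R.

Lemma e_n_multiple_node (m : Z) (j : nat) : e_n (Z.of_nat N * m) (INR j * h) = 1.
Proof.
  pose proof (lt_0_INR N HN). rewrite <- (e_n_IZR m (Z.of_nat j)).
  unfold e_n. rewrite !mult_IZR, <- !INR_IZR_INZ.
  f_equal; f_equal; field; lra.
Qed.

Lemma e_n_node_neq_1 (m : Z) : (0 < Z.abs m < Z.of_nat N)%Z -> e_n m h <> 1.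
Proof.
  intros Hm He. pose proof (lt_0_INR N HN). pose proof PI_RGT_0.
  assert (Hc : cos (2 * PI * IZR m * h) = 1%R) by exact (f_equal fst He).
  assert (Hs : sin (2 * PI * IZR m * h) = 0%R) by exact (f_equal snd He).
  apply sin_eq_0_0 in Hs as [k Hk].
  assert (Hkm : (2 * m = k * Z.of_nat N)%Z).
  { apply eq_IZR. rewrite !mult_IZR, <- INR_IZR_INZ.
    apply (Rmult_eq_reg_r (PI / INR N)); [|apply Rgt_not_eq, Rdiv_lt_0_compat; lra].
    replace (IZR 2 * IZR m * (PI / INR N))%R with (2 * PI * IZR m * h)%R
      by (simpl; field; lra).
    rewrite Hk. field. lra. }
  assert (k = 1 \/ k = -1)%Z as [-> | ->] by nia;
    rewrite Hk in Hc; simpl IZR in Hc.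
  - rewrite Rmult_1_l, cos_PI in Hc. lra.
  - replace (-1 * PI)%R with (- PI)%R in Hc by ring. rewrite cos_neg, cos_PI in Hc. lra.
Qed.

Lemma node_sum_delta0 (n : Z) : (Z.abs n < Z.of_nat N)%Z -> h * node_sum N n = delta0 n.
Proof.
  intros Hn. pose proof (lt_0_INR N HN). unfold delta0, node_sum.
  destruct (Z.eq_dec n 0) as [-> | Hn0].
  - rewrite (csum_ext N _ (fun _ => 1)), csum_const, <- !RtoC_mult;
      [f_equal; field; lra|].
    intros k _. rewrite <- (Z.mul_0_r (Z.of_nat N)). apply e_n_multiple_node.
  - assert (Hs : csum N (fun k => e_n n (INR (S k) * h)) = 0).
    { apply (Cmult_eq_0_l (e_n n h - 1)).
      - intros H1. apply (e_n_node_neq_1 n); [lia|].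
        rewrite <- (Cplus_0_l 1), <- H1. ring.
      - rewrite csum_e_n_geometric.
        replace (INR (S N) * h)%R with (IZR 1 + h)%R by (rewrite S_INR; simpl; field; lra).
        rewrite e_n_add, e_n_IZR. ring. }
    rewrite Hs. ring.
Qed.

Lemma node_sum_N : h * node_sum N (Z.of_nat N) = 1.
Proof.
  pose proof (lt_0_INR N HN). unfold node_sum.
  rewrite (csum_ext N _ (fun _ => 1)), csum_const, <- !RtoC_mult; [f_equal; field; lra|].
  intros k _. rewrite <- (Z.mul_1_r (Z.of_nat N)). apply e_n_multiple_node.
Qed.

End NodeSums.

Section QuadratureOfCharacters.
Local Open Scope C_scope.

Variables (N : nat) (t : R).
Hypothesis HN : (0 < N)%nat.
Hypothesis Ht : forall z : Z, (t / (1 / INR N) <> IZR z)%R.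
Local Notation h := (1 / INR N)%R.
Local Notation Q := (cot_quadrature N t).

Lemma sin_PI_sub_node (j : nat) : sin (PI * (t - INR j * h)) <> 0%R.
Proof.
  pose proof (lt_0_INR N HN). apply sin_PI_mul_neq0. intros z Hz.
  apply (Ht (z * Z.of_nat N + Z.of_nat j)%Z).
  rewrite plus_IZR, mult_IZR, <- !INR_IZR_INZ, <- Hz. field. lra.
Qed.

Lemma cot_quadrature_e_n_N : Q (e_n (Z.of_nat N)) = Q (e_n 0).
Proof.
  unfold cot_quadrature. f_equal. apply csum_ext. intros k _.
  rewrite <- (Z.mul_1_r (Z.of_nat N)), e_n_multiple_node, e_n_0 by exact HN.
  reflexivity.
Qed.

Lemma cot_quadrature_e_n_succ (n : Z) :
  Q (e_n (n + 1)) = e_n 1 t * Q (e_n n)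
                    - Ci * (e_n 1 t * (h * node_sum N n) + h * node_sum N (n + 1)).
Proof.
  unfold cot_quadrature, node_sum.
  rewrite (csum_ext N _ (fun k =>
      e_n 1 t * (cot (PI * (t - INR (S k) * h)) * e_n n (INR (S k) * h))
      + (- Ci * e_n 1 t * e_n n (INR (S k) * h) + - Ci * e_n (n + 1) (INR (S k) * h))))
    by (intros k _; rewrite cot_mul_e_n_succ by apply sin_PI_sub_node; ring).
  rewrite !csum_plus, !csum_scal. ring.
Qed.

Lemma cot_quadrature_defect_succ (n : Z) :
  Q (e_n (n + 1)) - e_n (n + 1) t * Q (e_n 0) =
  e_n 1 t * (Q (e_n n) - e_n n t * Q (e_n 0))
  - Ci * (e_n 1 t * (h * node_sum N n) + h * node_sum N (n + 1)).
Proof. rewrite cot_quadrature_e_n_succ, e_n_freq_add. ring. Qed.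

Lemma cot_quadrature_defect (n : Z) : (Z.abs n < Z.of_nat N)%Z ->
  Q (e_n n) - e_n n t * Q (e_n 0) = hilbert_e n t.
Proof.
  intros Hn.
  set (D m := Q (e_n m) - e_n m t * Q (e_n 0) - hilbert_e m t).
  assert (HD : D n = 0).
  { apply (recurrence_zero (e_n 1 t) D N (e_n_1_neq_0 t)); [|intros m Hlo Hhi|exact Hn].
    - unfold D, hilbert_e. rewrite e_n_0. simpl Z.sgn. ring.
    - unfold D. rewrite cot_quadrature_defect_succ, hilbert_e_succ, !node_sum_delta0
        by (exact HN || lia). ring. }
  unfold D in HD. rewrite <- (Cplus_0_r (hilbert_e n t)), <- HD. ring.
Qed.

(* The recurrence step from N - 1 to N closes up because e_N = e_0 on the nodes. *)
Lemma cot_quadrature_e_n_0_closure :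
  Q (e_n 0) * (1 - e_n (Z.of_nat N) t) = - Ci * (1 + e_n (Z.of_nat N) t).
Proof.
  pose proof (cot_quadrature_defect_succ (Z.of_nat N - 1)) as Hs.
  pose proof (hilbert_e_succ (Z.of_nat N - 1) t) as Hh.
  replace (Z.of_nat N - 1 + 1)%Z with (Z.of_nat N) in Hs, Hh by lia.
  rewrite cot_quadrature_e_n_N, node_sum_N, node_sum_delta0, cot_quadrature_defect in Hs
    by (exact HN || lia).
  assert (HhN : hilbert_e (Z.of_nat N) t = - Ci * e_n (Z.of_nat N) t).
  { unfold hilbert_e. replace (Z.sgn (Z.of_nat N)) with 1%Z by lia. ring. }
  assert (HdN : delta0 (Z.of_nat N) = 0).
  { unfold delta0. destruct (Z.eq_dec (Z.of_nat N) 0); [lia | reflexivity]. }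
  transitivity (Q (e_n 0) - e_n (Z.of_nat N) t * Q (e_n 0)); [ring|].
  rewrite Hs.
  transitivity (hilbert_e (Z.of_nat N) t + Ci * delta0 (Z.of_nat N) - Ci);
    [rewrite Hh; ring | rewrite HhN, HdN; ring].
Qed.

Lemma cot_quadrature_e_n_0 : Q (e_n 0) = cot (PI * t / h).
Proof.
  pose proof (lt_0_INR N HN).
  set (W := e_n (Z.of_nat N) t).
  assert (Hcot : cot (PI * t / h) * (1 - W) = - Ci * (1 + W)).
  { replace (PI * t / h)%R with (PI * (INR N * t))%R by (field; lra).
    replace W with (e_n 1 (INR N * t))
      by (unfold W, e_n; rewrite <- INR_IZR_INZ; f_equal; f_equal; ring).
    apply cot_mul_one_sub_e_n_1, sin_PI_mul_neq0.
    intros z Hz. apply (Ht z). rewrite <- Hz. field. lra. }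
  assert (HW : 1 - W <> 0).
  { intros H0. assert (HW1 : W = 1) by (transitivity (1 - (1 - W)); [ring | rewrite H0; ring]).
    rewrite HW1 in Hcot. apply (f_equal snd) in Hcot. simpl in Hcot. lra. }
  assert (Hdiff : (1 - W) * (Q (e_n 0) - cot (PI * t / h)) = 0).
  { transitivity (Q (e_n 0) * (1 - W) - cot (PI * t / h) * (1 - W)); [ring|].
    pose proof cot_quadrature_e_n_0_closure as Hq. fold W in Hq. rewrite Hq, Hcot. ring. }
  apply (Cmult_eq_0_l _ _ HW) in Hdiff.
  rewrite <- (Cplus_0_r (RtoC (cot _))), <- Hdiff. ring.
Qed.

Lemma cot_quadrature_e_n (n : Z) : (Z.abs n < Z.of_nat N)%Z ->
  Q (e_n n) - cot (PI * t / h) * e_n n t = hilbert_e n t.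
Proof.
  intros Hn. rewrite <- cot_quadrature_e_n_0, <- (cot_quadrature_defect n Hn). ring.
Qed.

End QuadratureOfCharacters.

(** * Derivatives of complex-valued functions *)

(* The cast makes [l] elaborate at type [C], so that complex notations and the
   coercion from [R] apply to it. *)
Notation derC f x l := (@is_derive R_AbsRing C_R_NormedModule f x (l : C)).

Section ComplexDerivatives.
Local Open Scope C_scope.

Lemma derC_components (F : R -> C) (x : R) (l : C) :
  is_derive (fun y => Re (F y)) x (Re l) -> is_derive (fun y => Im (F y)) x (Im l) ->
  derC F x l.
Proof.
  intros H1 H2. unfold is_derive in *.
  eapply filterdiff_ext_lin.
  - eapply filterdiff_ext.
    2: apply (filterdiff_comp'_2 (K := R_AbsRing) (W := C_R_NormedModule)
                (fun y => Re (F y)) (fun y => Im (F y)) (fun u v => (u, v)) x _ _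
                (fun u v => (u, v)) H1 H2).
    + intros y. simpl. destruct (F y). reflexivity.
    + apply filterdiff_linear. split; [reflexivity | reflexivity |].
      exists 1%R. split; [lra|]. intros [u1 u2]. rewrite Rmult_1_l. apply Rle_refl.
  - intros y. destruct l. reflexivity.
Qed.

Lemma derC_Re (F : R -> C) (x : R) (l : C) : derC F x l -> is_derive (fun y => Re (F y)) x (Re l).
Proof.
  intros H. unfold is_derive in *. eapply filterdiff_ext_lin.
  - eapply (filterdiff_comp' F (fun u : C_R_NormedModule => fst u)); [exact H|].
    apply filterdiff_linear, (is_linear_fst (U := R_NormedModule) (V := R_NormedModule)).
  - reflexivity.
Qed.

Lemma derC_Im (F : R -> C) (x : R) (l : C) : derC F x l -> is_derive (fun y => Im (F y)) x (Im l).
Proof.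
  intros H. unfold is_derive in *. eapply filterdiff_ext_lin.
  - eapply (filterdiff_comp' F (fun u : C_R_NormedModule => snd u)); [exact H|].
    apply filterdiff_linear, (is_linear_snd (U := R_NormedModule) (V := R_NormedModule)).
  - reflexivity.
Qed.

Lemma derC_eq (F : R -> C) (x : R) (l l' : C) : derC F x l -> l = l' -> derC F x l'.
Proof. intros H <-. exact H. Qed.

Lemma derC_ext (F G : R -> C) (x : R) (l : C) :
  (forall y, F y = G y) -> derC F x l -> derC G x l.
Proof. apply (is_derive_ext (K := R_AbsRing) (V := C_R_NormedModule)). Qed.

Lemma derC_const (c : C) (x : R) : derC (fun _ => c) x 0.
Proof. exact (@is_derive_const R_AbsRing C_R_NormedModule c x). Qed.

Lemma derC_plus (F G : R -> C) (x : R) (a b : C) :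
  derC F x a -> derC G x b -> derC (fun y => F y + G y) x (a + b).
Proof. exact (@is_derive_plus R_AbsRing C_R_NormedModule F G x a b). Qed.

Lemma derC_RtoC (f : R -> R) (x a : R) : is_derive f x a -> derC (fun y => RtoC (f y)) x a.
Proof.
  intros H. apply derC_components; simpl;
    [exact H | exact (is_derive_const (V := R_NormedModule) 0 x)].
Qed.

Lemma derC_mult (F G : R -> C) (x : R) (a b : C) : derC F x a -> derC G x b ->
  derC (fun y => F y * G y) x (a * G x + F x * b).
Proof.
  intros HF HG. apply derC_Re in HF as HF1. apply derC_Im in HF as HF2.
  apply derC_Re in HG as HG1. apply derC_Im in HG as HG2.
  apply derC_components.
  - replace (Re (a * G x + F x * b))
      with (Re a * Re (G x) + Re (F x) * Re b - (Im a * Im (G x) + Im (F x) * Im b))%R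
      by (unfold Re, Im; simpl; ring).
    exact (is_derive_minus _ _ x _ _ (is_derive_mult _ _ x _ _ HF1 HG1 Rmult_comm)
                                     (is_derive_mult _ _ x _ _ HF2 HG2 Rmult_comm)).
  - replace (Im (a * G x + F x * b))
      with (Re a * Im (G x) + Re (F x) * Im b + (Im a * Re (G x) + Im (F x) * Re b))%R
      by (unfold Re, Im; simpl; ring).
    exact (is_derive_plus _ _ x _ _ (is_derive_mult _ _ x _ _ HF1 HG2 Rmult_comm)
                                    (is_derive_mult _ _ x _ _ HF2 HG1 Rmult_comm)).
Qed.

Lemma derC_scal (c : C) (F : R -> C) (x : R) (a : C) :
  derC F x a -> derC (fun y => c * F y) x (c * a).
Proof.
  intros H. eapply derC_eq; [apply (derC_mult _ _ _ _ _ (derC_const c x) H)|]. ring.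
Qed.

Lemma derC_csum (n : nat) (F : nat -> R -> C) (dF : nat -> C) (x : R) :
  (forall k, (k < n)%nat -> derC (F k) x (dF k)) ->
  derC (fun y => csum n (fun k => F k y)) x (csum n dF).
Proof.
  induction n as [|n IH]; intros H; simpl.
  - apply derC_const.
  - apply derC_plus; [apply IH; intros; apply H|apply H]; lia.
Qed.

Lemma derC_comp (G : R -> C) (g : R -> R) (x : R) (l : C) (dg : R) :
  derC G (g x) l -> is_derive g x dg -> derC (fun y => G (g y)) x (dg * l).
Proof.
  intros HG Hg. rewrite <- scal_R_Cmult.
  exact (is_derive_comp (V := C_R_NormedModule) G g x l dg HG Hg).
Qed.

Lemma derC_continuous (F : R -> C) (x : R) (l : C) :
  derC F x l -> @continuous R_UniformSpace C_UniformSpace F x.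
Proof.
  intros H. apply (ex_derive_continuous (K := R_AbsRing) (V := C_R_NormedModule)).
  exists l. exact H.
Qed.

Lemma derC_e_n (m : Z) (x : R) : derC (e_n m) x (Ci * (2 * PI * IZR m)%R * e_n m x).
Proof.
  apply derC_components; unfold e_n; simpl; auto_derive; auto; ring.
Qed.

End ComplexDerivatives.

(** * Primitives of the cot kernel *)

Definition logsin (u : R) : R := - / (2 * PI) * ln (sin (PI * u) ^ 2).

Lemma logsin_derive (t s : R) : sin (PI * (t - s)) <> 0 ->
  is_derive (fun y => logsin (t - y)) s (cot (PI * (t - s))).
Proof.
  intros Hs. pose proof PI_RGT_0. unfold logsin.
  assert (Hp : 0 < sin (PI * (t - s)) ^ 2) by (apply pow2_gt_0; exact Hs).
  auto_derive; replace (t + - s) with (t - s) by ring.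
  - simpl in Hp. lra.
  - unfold cot. field. split; lra.
Qed.

Lemma logsin_opp (u : R) : logsin (- u) = logsin u.
Proof.
  unfold logsin. rewrite <- Ropp_mult_distr_r, sin_neg. f_equal. f_equal. ring.
Qed.

Lemma logsin_add_IZR (u : R) (k : Z) : logsin (u + IZR k) = logsin u.
Proof.
  assert (Hk : sin (IZR k * PI) = 0) by (apply sin_eq_0_1; exists k; reflexivity).
  unfold logsin. rewrite Rmult_plus_distr_l, (Rmult_comm PI (IZR k)), sin_plus, Hk.
  replace ((sin (PI * u) * cos (IZR k * PI) + cos (PI * u) * 0) ^ 2)
    with (sin (PI * u) ^ 2 * cos (IZR k * PI) ^ 2) by ring.
  rewrite <- (Rmult_1_r (sin (PI * u) ^ 2)) at 2.
  f_equal. f_equal. f_equal.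
  pose proof (sin2_cos2 (IZR k * PI)) as H. unfold Rsqr in H. rewrite Hk in H. lra.
Qed.

Section Primitives.
Local Open Scope C_scope.

Definition e_n_primitive (m : Z) (s : R) : C :=
  if Z.eq_dec m 0 then RtoC s
  else ((sin (2 * PI * IZR m * s) / (2 * PI * IZR m))%R,
        (- cos (2 * PI * IZR m * s) / (2 * PI * IZR m))%R).

Lemma e_n_primitive_derive (m : Z) (s : R) : derC (e_n_primitive m) s (e_n m s).
Proof.
  unfold e_n_primitive. destruct (Z.eq_dec m 0) as [-> | Hm].
  - rewrite e_n_0. apply derC_RtoC. exact (is_derive_id (K := R_AbsRing) s).
  - pose proof PI_RGT_0. apply not_0_IZR in Hm.
    apply derC_components; unfold e_n; simpl; auto_derive; auto; field; split; lra.
Qed.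

Lemma e_n_primitive_1_0 (m : Z) : e_n_primitive m 1 - e_n_primitive m 0 = delta0 m.
Proof.
  unfold e_n_primitive, delta0. destruct (Z.eq_dec m 0) as [_ | Hm]; [ring|].
  pose proof PI_RGT_0. apply not_0_IZR in Hm.
  rewrite Rmult_1_r, Rmult_0_r, cos_2PI_IZR, sin_2PI_IZR, cos_0, sin_0.
  apply C_pair_eq; simpl; field; split; lra.
Qed.

End Primitives.

Section KernelPrimitives.
Local Open Scope C_scope.

(* [G] is the regular part of a primitive of [cot (PI * (t - y)) * f y]; the
   singular part [f t * logsin (t - y)] is even about each singularity and
   1-periodic, so it drops out of the principal value on [0, 1]. *)
Definition cot_kernel_primitive (t : R) (f G : R -> C) : Prop :=
  (forall s, sin (PI * (t - s)) <> 0%R ->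
     derC (fun y => f t * logsin (t - y) + G y) s (cot (PI * (t - s)) * f s)) /\
  (forall s, exists l, derC G s l).

Lemma cot_kernel_primitive_ext (t : R) (f g G : R -> C) :
  (forall y, f y = g y) -> cot_kernel_primitive t f G -> cot_kernel_primitive t g G.
Proof.
  intros Hfg [Hd HG]. split; [|exact HG].
  intros s Hs. rewrite <- !Hfg. exact (Hd s Hs).
Qed.

Lemma cot_kernel_primitive_0 (t : R) :
  cot_kernel_primitive t (fun _ => 0) (fun _ => 0).
Proof.
  split; [|intros s; exists 0; apply derC_const].
  intros s _. eapply derC_eq.
  - apply (derC_ext (fun _ => RtoC 0)); [intros y; ring | apply derC_const].
  - ring.
Qed.

Lemma cot_kernel_primitive_add (t : R) (f g G H : R -> C) (c : C) :
  cot_kernel_primitive t f G -> cot_kernel_primitive t g H ->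
  cot_kernel_primitive t (fun y => f y + c * g y) (fun y => G y + c * H y).
Proof.
  intros [HfG HG] [HgH HH]. split.
  - intros s Hs. eapply derC_eq.
    + apply (derC_ext
        (fun y => (f t * logsin (t - y) + G y) + c * (g t * logsin (t - y) + H y)));
        [intros y; ring|].
      apply derC_plus; [|apply derC_scal]; auto.
    + ring.
  - intros s. destruct (HG s) as [l1 Hl1], (HH s) as [l2 Hl2].
    exists (l1 + c * l2). apply derC_plus; [|apply derC_scal]; assumption.
Qed.

Lemma cot_kernel_primitive_transfer (t : R) (f g G D d : R -> C) (a : C) :
  cot_kernel_primitive t f G -> g t = a * f t ->
  (forall s, sin (PI * (t - s)) <> 0%R ->
     cot (PI * (t - s)) * g s = a * (cot (PI * (t - s)) * f s) + d s) ->
  (forall s, derC D s (d s)) ->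
  cot_kernel_primitive t g (fun y => a * G y + D y).
Proof.
  intros [HfG HG] Hgt Hcot HD. split.
  - intros s Hs. eapply derC_eq.
    + apply (derC_ext (fun y => a * (f t * logsin (t - y) + G y) + D y));
        [intros y; rewrite Hgt; ring|].
      apply derC_plus; [apply derC_scal, HfG, Hs | apply HD].
    + rewrite Hcot by exact Hs. reflexivity.
  - intros s. destruct (HG s) as [l Hl].
    exists (a * l + d s). apply derC_plus; [apply derC_scal, Hl | apply HD].
Qed.

Lemma cot_kernel_primitive_e_n_0 (t : R) :
  cot_kernel_primitive t (e_n 0) (fun _ => 0).
Proof.
  split; [|intros s; exists 0; apply derC_const].
  intros s Hs. rewrite !e_n_0. eapply derC_eq.
  - apply derC_plus; [apply derC_scal, derC_RtoC, logsin_derive, Hs | apply derC_const].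
  - ring.
Qed.

Lemma cot_kernel_primitive_e_n_succ (t : R) (n : Z) (G : R -> C) :
  cot_kernel_primitive t (e_n n) G -> G 1 - G 0 = hilbert_e n t ->
  exists G', cot_kernel_primitive t (e_n (n + 1)) G' /\ G' 1 - G' 0 = hilbert_e (n + 1) t.
Proof.
  intros HG HGv.
  exists (fun y => e_n 1 t * G y + - Ci * (e_n 1 t * e_n_primitive n y + e_n_primitive (n + 1) y)).
  split.
  - apply (cot_kernel_primitive_transfer t (e_n n) _ G _
             (fun s => - Ci * (e_n 1 t * e_n n s + e_n (n + 1) s)) _ HG).
    + rewrite Z.add_comm, e_n_freq_add. reflexivity.
    + intros s Hs. rewrite cot_mul_e_n_succ by exact Hs. ring.
    + intros s. apply derC_scal, derC_plus; [apply derC_scal|]; apply e_n_primitive_derive.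
  - rewrite hilbert_e_succ, <- HGv, <- !e_n_primitive_1_0. ring.
Qed.

Lemma cot_kernel_primitive_e_n_pred (t : R) (n : Z) (G : R -> C) :
  cot_kernel_primitive t (e_n n) G -> G 1 - G 0 = hilbert_e n t ->
  exists G', cot_kernel_primitive t (e_n (n - 1)) G' /\ G' 1 - G' 0 = hilbert_e (n - 1) t.
Proof.
  intros HG HGv.
  exists (fun y => e_n (-1) t * G y
           + e_n (-1) t * Ci * (e_n 1 t * e_n_primitive (n - 1) y + e_n_primitive n y)).
  split.
  - apply (cot_kernel_primitive_transfer t (e_n n) _ G _
             (fun s => e_n (-1) t * Ci * (e_n 1 t * e_n (n - 1) s + e_n n s)) _ HG).
    + replace (n - 1)%Z with (-1 + n)%Z by lia. apply e_n_freq_add.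
    + intros s Hs. pose proof (cot_mul_e_n_succ (n - 1) t s Hs) as Hc.
      replace (n - 1 + 1)%Z with n in Hc by lia. rewrite Hc.
      transitivity (e_n (-1) t * e_n 1 t * (cot (PI * (t - s)) * e_n (n - 1) s));
        [rewrite e_n_opp_1; ring | ring].
    + intros s. apply derC_scal, derC_plus; [apply derC_scal|]; apply e_n_primitive_derive.
  - pose proof (hilbert_e_succ (n - 1) t) as Hh.
    replace (n - 1 + 1)%Z with n in Hh by lia.
    transitivity (e_n (-1) t * (G 1 - G 0) + e_n (-1) t * Ci *
      (e_n 1 t * (e_n_primitive (n - 1) 1 - e_n_primitive (n - 1) 0)
       + (e_n_primitive n 1 - e_n_primitive n 0))); [ring|].
    rewrite HGv, !e_n_primitive_1_0, Hh.
    transitivity (e_n (-1) t * e_n 1 t * hilbert_e (n - 1) t); [ring | rewrite e_n_opp_1; ring].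
Qed.

Lemma cot_kernel_primitive_e_n (t : R) (n : Z) :
  exists G, cot_kernel_primitive t (e_n n) G /\ G 1 - G 0 = hilbert_e n t.
Proof.
  induction n as [|n [G [HG HGv]]|n [G [HG HGv]]] using Z.peano_ind.
  - exists (fun _ => RtoC 0). split; [apply cot_kernel_primitive_e_n_0|].
    unfold hilbert_e. simpl Z.sgn. ring.
  - exact (cot_kernel_primitive_e_n_succ t n G HG HGv).
  - rewrite <- Z.sub_1_r. exact (cot_kernel_primitive_e_n_pred t n G HG HGv).
Qed.

Lemma cot_kernel_primitive_lincomb (t : R) (M : nat) (a : nat -> C) (f : nat -> Z) :
  exists G, cot_kernel_primitive t (fun y => csum M (fun k => a k * e_n (f k) y)) G /\
            G 1 - G 0 = csum M (fun k => a k * hilbert_e (f k) t).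
Proof.
  induction M as [|M IH].
  - exists (fun _ => RtoC 0). split; [apply cot_kernel_primitive_0 | simpl; ring].
  - destruct IH as [G [HG HGv]], (cot_kernel_primitive_e_n t (f M)) as [H [HH HHv]].
    exists (fun y => G y + a M * H y). split.
    + exact (cot_kernel_primitive_add t _ _ _ _ (a M) HG HH).
    + simpl csum. rewrite <- HGv, <- HHv. ring.
Qed.

End KernelPrimitives.

(** * Principal values *)

Section PrincipalValue.
Local Open Scope C_scope.

Lemma RIntC_derive (F g : R -> C) (lo hi : R) : (lo <= hi)%R ->
  (forall x, (lo <= x <= hi)%R -> derC F x (g x)) ->
  (forall x, (lo <= x <= hi)%R -> @continuous R_UniformSpace C_UniformSpace g x) ->
  RIntC g lo hi = F hi - F lo.
Proof.
  intros Hlh HF Hg. unfold RIntC. apply (is_RInt_unique (V := C_R_CompleteNormedModule)).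
  apply (is_RInt_derive (V := C_R_CompleteNormedModule) F);
    intros x Hx; rewrite Rmin_left, Rmax_right in Hx by exact Hlh; auto.
Qed.

Variables (t : R) (f G : R -> C).
Hypothesis Hf : forall y, exists l, derC f y l.
Hypothesis HfG : cot_kernel_primitive t f G.

Lemma cot_kernel_continuous (s : R) : sin (PI * (t - s)) <> 0%R ->
  @continuous R_UniformSpace C_UniformSpace (fun y => cot (PI * (t - y)) * f y) s.
Proof.
  intros Hs. destruct (Hf s) as [l Hl].
  assert (Hcot : ex_derive (fun y => cot (PI * (t - y))) s) by (unfold cot; auto_derive; auto).
  destruct Hcot as [c Hc].
  exact (derC_continuous _ _ _ (derC_mult _ _ _ _ _ (derC_RtoC _ _ _ Hc) Hl)).
Qed.

Lemma RIntC_cot_kernel (lo hi : R) : (lo <= hi)%R ->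
  (forall x, (lo <= x <= hi)%R -> sin (PI * (t - x)) <> 0%R) ->
  RIntC (fun y => cot (PI * (t - y)) * f y) lo hi =
  (f t * logsin (t - hi) + G hi) - (f t * logsin (t - lo) + G lo).
Proof.
  intros Hlh Hs. destruct HfG as [Hd _].
  apply (RIntC_derive (fun y => f t * logsin (t - y) + G y));
    [exact Hlh | intros x Hx; apply Hd | intros x Hx; apply cot_kernel_continuous]; auto.
Qed.

Lemma cot_kernel_pv_window (e : R) :
  (0 < e < Rmin (frac_part t) (1 - frac_part t))%R ->
  RIntC (fun y => cot (PI * (t - y)) * f y) 0 (frac_part t - e) +
  RIntC (fun y => cot (PI * (t - y)) * f y) (frac_part t + e) 1 =
  G (frac_part t - e)%R + -1 * G (frac_part t + e)%R + (G 1 - G 0).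
Proof.
  intros He. set (c0 := frac_part t) in *. set (k0 := Int_part t).
  assert (Htc : t = (IZR k0 + c0)%R) by apply Rplus_Int_part_frac_part.
  pose proof (Rmin_l c0 (1 - c0)). pose proof (Rmin_r c0 (1 - c0)).
  rewrite (RIntC_cot_kernel 0 (c0 - e)), (RIntC_cot_kernel (c0 + e) 1)
    by (lra || (intros x Hx; apply (sin_PI_mul_strip k0); lra)
            || (intros x Hx; apply (sin_PI_mul_strip (k0 - 1)); rewrite minus_IZR; lra)).
  replace (t - (c0 - e))%R with (e + IZR k0)%R by lra.
  replace (t - (c0 + e))%R with (- e + IZR k0)%R by lra.
  replace (t - 1)%R with ((t - 0) + IZR (-1))%R by (simpl; ring).
  rewrite !logsin_add_IZR, logsin_opp. ring.
Qed.

Lemma is_periodic_Hilbert_of_primitive : (forall z : Z, t <> IZR z) ->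
  is_periodic_Hilbert f t (G 1 - G 0).
Proof.
  intros Ht. pose proof (frac_part_nonint t Ht) as Hc0. set (c0 := frac_part t) in *.
  set (psi e := G (c0 - e)%R + -1 * G (c0 + e)%R + (G 1 - G 0)).
  unfold is_periodic_Hilbert, is_pv_integral. fold c0.
  apply (filterlim_ext_loc psi).
  - assert (Hd : (0 < Rmin c0 (1 - c0))%R) by (apply Rmin_pos; lra).
    exists (mkposreal _ Hd). intros e He Hpos. simpl in He.
    change (Rabs (e - 0) < Rmin c0 (1 - c0))%R in He.
    rewrite Rminus_0_r in He. apply Rabs_def2 in He as [He _].
    symmetry. apply cot_kernel_pv_window. split; assumption.
  - apply (filterlim_filter_le_1 (F := locally 0%R)); [apply filter_le_within|].
    replace (G 1 - G 0) with (psi 0%R) by (unfold psi; rewrite Rminus_0_r, Rplus_0_r; ring).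
    destruct HfG as [_ HG].
    destruct (HG (c0 - 0)%R) as [l1 Hl1], (HG (c0 + 0)%R) as [l2 Hl2].
    apply (derC_continuous psi 0%R ((0 - 1)%R * l1 + -1 * ((0 + 1)%R * l2) + 0)).
    apply derC_plus; [apply derC_plus | apply derC_const].
    + apply (derC_comp G (fun e => c0 - e)%R); [exact Hl1 | auto_derive; [exact I | ring]].
    + apply derC_scal, (derC_comp G (fun e => c0 + e)%R);
        [exact Hl2 | auto_derive; [exact I | ring]].
Qed.

End PrincipalValue.

Lemma derC_lincomb_e_n (M : nat) (a : nat -> C) (f : nat -> Z) (y : R) :
  exists l, derC (fun x => csum M (fun k => Cmult (a k) (e_n (f k) x))) y l.
Proof. eexists. apply derC_csum. intros k _. apply derC_scal, derC_e_n. Qed.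

Lemma freq_bound (N k : nat) : (0 < N)%nat -> (k < N)%nat ->
  (Z.abs (freq N k) < Z.of_nat N)%Z.
Proof.
  intros HN Hk. unfold freq.
  assert (0 <= Z.of_nat N / 2)%Z by (apply Z.div_pos; lia).
  assert (Z.of_nat N / 2 < Z.of_nat N)%Z by (apply Z.div_lt; lia).
  lia.
Qed.

Theorem proposition5p1 (N : nat) (HN : (0 < N)%nat) (phi : R -> C)
  (Hphi : in_Th N phi) (t : R)
  (Ht : forall z : Z, t / (1 / INR N) <> IZR z) :
  let h := 1 / INR N in
  is_periodic_Hilbert phi t
    (Cminus
       (Cmult (RtoC h)
          (csum N (fun k => let j := S k in
             Cmult (RtoC (cot (PI * (t - INR j * h)))) (phi (INR j * h)))))
       (Cmult (RtoC (cot (PI * t / h))) (phi t))).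
Proof.
  cbv zeta. destruct Hphi as [c Hc].
  change (is_periodic_Hilbert phi t
    (Cminus (cot_quadrature N t phi) (Cmult (RtoC (cot (PI * t / (1 / INR N)))) (phi t)))).
  assert (Hquad : Cminus (cot_quadrature N t phi)
                    (Cmult (RtoC (cot (PI * t / (1 / INR N)))) (phi t))
                  = csum N (fun k => Cmult (c (freq N k)) (hilbert_e (freq N k) t))).
  { rewrite (cot_quadrature_ext N t phi _ Hc),
      (cot_quadrature_lincomb N N t (fun k => c (freq N k)) (fun k => e_n (freq N k))), Hc,
      <- csum_scal, <- csum_minus.
    apply csum_ext. intros k Hk.
    rewrite <- (cot_quadrature_e_n N t HN Ht (freq N k) (freq_bound N k HN Hk)). ring. }
  destruct (cot_kernel_primitive_lincomb t N (fun k => c (freq N k)) (freq N))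
    as [G [HG HGv]].
  rewrite Hquad, <- HGv.
  apply is_periodic_Hilbert_of_primitive.
  - intros y. destruct (derC_lincomb_e_n N (fun k => c (freq N k)) (freq N) y) as [l Hl].
    exists l. exact (derC_ext _ _ _ _ (fun x => eq_sym (Hc x)) Hl).
  - exact (cot_kernel_primitive_ext t _ _ _ (fun x => eq_sym (Hc x)) HG).
  - intros z Hz. apply (Ht (z * Z.of_nat N)%Z). pose proof (lt_0_INR N HN).
    rewrite mult_IZR, <- INR_IZR_INZ, Hz. field. lra.
Qed.
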